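(* Let $m\ge 1$, let $t_0$ be a vertex of $P(G,g_0)$, and let $t_1,\dots,t_m$ and $\mu$-operations $\nu_1,\dots,\nu_m$ be such that for each $i=1,\dots,m$ the operation $\nu_i$ is applicable to $t_{i-1}$ and $t_i=\nu_i(t_{i-1})$, and for each $i=1,\dots,m-1$ the leading element of $\nu_{i+1}$ equals the new element of $\nu_i$. Then $t_0,t_1,\dots,t_m$ are pairwise distinct vertices of $P(G,g_0)$ and any two of them are adjacent, i.e. they induce a complete subgraph of the graph of $P(G,g_0)$.
   Context: Let $G$ be a finite abelian group of order $D$ with zero element $0$, and let $G^+=G\setminus\{0\}$. For $g_0\in G$, let $T(G,g_0)$ be the set of vectors $t=(t(g))_{g\in G^+}\in\mathbb{Z}_{\ge 0}^{G^+}$ with $\sum_{g\in G^+}t(g)g=g_0$ (sum computed in $G$), where the zero vector is excluded when $g_0=0$. The master corner polyhedron is $P(G,g_0)=\mathrm{conv}\,T(G,g_0)\subset\mathbb{R}^{G^+}$. For $t\in T(G,g_0)$ put $G_t=\{g\in G^+ : t(g)>0\}$. The graph of $P(G,g_0)$ has the vertices of $P(G,g_0)$ as nodes, two vertices being adjacent if the segment joining them is an edge (one-dimensional face) of $P(G,g_0)$. $\mu$-operations: For $t\in T(G,g_0)$ and distinct $h,f\in G_t$ with $t(h)\le t(f)$ and $h+f\neq 0$, the operation $\mu_{h,f}$ is said to be applicable to $t$, and $s=\mu_{h,f}(t)$ is defined by $s(h)=0$, $s(f)=t(f)-t(h)$, $s(h+f)=t(h+f)+t(h)$, and $s(g)=t(g)$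 for all other $g\in G^+$. For $t\in T(G,g_0)$ and $h\in G_t$ with $t(h)>1$ and $t(h)h\neq 0$, the operation $\mu_h$ is applicable to $t$, and $s=\mu_h(t)$ is defined by $s(h)=0$, $s(t(h)h)=t(t(h)h)+1$, and $s(g)=t(g)$ for all other $g\in G^+$. The leading element of $\mu_{h,f}$ and of $\mu_h$ is $h$; the new element of $\mu_{h,f}$ applied to $t$ is $h+f$, and the new element of $\mu_h$ applied to $t$ is $t(h)h$. *)

From HB Require Import structures.
From mathcomp Require Import all_boot all_order all_algebra.
Set Implicit Arguments. Unset Strict Implicit. Unset Printing Implicit Defensive.
Import Order.TTheory GRing.Theory Num.Theory.

(* Points of R^{G^+} are represented by functions on G; only coordinates
   g != 0 are ever used (dot products range over G^+, and the embedded
   points of T have coordinate 0 at g = 0). *)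

Section Defs.
Variable G : finZmodType.

(* T(G,g0): nonnegative integer vectors on G^+ (stored as ffun on G with
   value 0 at 0) with sum_{g in G^+} t(g) g = g0, zero vector excluded if g0 = 0 *)
Definition inT (g0 : G) (t : {ffun G -> nat}) : Prop :=
  t 0%R = 0%N /\
  (\sum_(g : G | g != 0%R) g *+ t g)%R = g0 /\
  (g0 = 0%R -> exists g : G, g != 0%R /\ (0 < t g)%N).

Variable R : realFieldType.
Local Open Scope ring_scope.

Definition embed (t : {ffun G -> nat}) : {ffun G -> R} := [ffun g => (t g)%:R].

Definition inP (g0 : G) (x : {ffun G -> R}) : Prop :=
  exists (n : nat) (ts : 'I_n -> {ffun G -> nat}) (lam : 'I_n -> R),
    (forall i, inT g0 (ts i)) /\ (forall i, 0 <= lam i) /\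
    \sum_(i < n) lam i = 1 /\
    forall g : G, x g = \sum_(i < n) lam i * (ts i g)%:R.

Definition dotp (c : G -> R) (x : {ffun G -> R}) : R :=
  \sum_(g : G | g != 0) c g * x g.

Definition is_vertex (g0 : G) (v : {ffun G -> R}) : Prop :=
  inP g0 v /\
  exists (c : G -> R) (d : R),
    (forall x, inP g0 x -> dotp c x <= d) /\
    (forall x, inP g0 x -> (dotp c x = d <-> x = v)).

Definition adjacent (g0 : G) (u v : {ffun G -> R}) : Prop :=
  is_vertex g0 u /\ is_vertex g0 v /\ u <> v /\
  exists (c : G -> R) (d : R),
    (forall x, inP g0 x -> dotp c x <= d) /\
    (forall x, inP g0 x -> (dotp c x = d <->
        exists l : R, 0 <= l <= 1 /\ x = [ffun g => (1 - l) * u g + l * v g])).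
End Defs.

Section Mu.
Variable G : finZmodType.
Local Open Scope ring_scope.

(* MuPair h f = mu_{h,f};  MuSingle h = mu_h *)
Inductive mu_op := MuPair of G & G | MuSingle of G.

Definition applicable (g0 : G) (t : {ffun G -> nat}) (o : mu_op) : Prop :=
  inT g0 t /\
  match o with
  | MuPair h f => [&& h != 0, f != 0, (0 < t h)%N, (0 < t f)%N,
                   h != f, (t h <= t f)%N & h + f != 0]
  | MuSingle h => [&& h != 0, (1 < t h)%N & h *+ t h != 0]
  end.

Definition mu_apply (o : mu_op) (t : {ffun G -> nat}) : {ffun G -> nat} :=
  match o with
  | MuPair h f =>
      [ffun g => if g == h then 0%N
                 else if g == f then (t f - t h)%N
                 else if g == h + f then (t (h + f)%R + t h)%N
                 else t g]
  | MuSingle h =>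
      let t' := [ffun g => if g == h then 0%N else t g] in
      [ffun g => if g == h *+ t h then (t' g).+1 else t' g]
  end.

Definition leading (o : mu_op) : G :=
  match o with MuPair h _ => h | MuSingle h => h end.

Definition new_elem (o : mu_op) (t : {ffun G -> nat}) : G :=
  match o with MuPair h f => h + f | MuSingle h => h *+ t h end.
End Mu.

From HB Require Import structures.
From mathcomp Require Import all_boot all_order all_algebra.
From mathcomp Require Import zify ring lra.
Import Order.TTheory GRing.Theory Num.Theory.
Set Implicit Arguments. Unset Strict Implicit. Unset Printing Implicit Defensive.

(* Since t_0 is a vertex, it is the unique minimizer over T(G,g0)
   of some linear cost w.  An exchange argument shows that two nonzero
   sub-vectors of t_0 representing the same group element coincide.  Along
   the chain we maintain an invariant: t_j arises from t_0 by replacing k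
   disjoint copies of a block b (a sub-vector representing the current
   element n and containing all copies of the first leading element h1) by
   k copies of n; the exchange argument shows each new element is absent
   from t_0, which keeps the invariant alive.  Re-pricing n by the cost of
   its block, a point t of T costs what its expansion (every n replaced by b)
   costs under w.  Hence t_j is the unique minimizer of the re-priced cost
   plus a penalty on h1 (so it is a vertex), and the minimizers of the
   re-priced cost alone are the points expanding to t_0, which fill the
   segment [t_0, t_j] (so t_0 and t_j are adjacent).  A tail of a chain is a
   chain, which gives adjacency of t_i and t_j for all i < j. *)

Section Polyhedron.
Variables (G : finZmodType) (R : realFieldType) (g0 : G).
Local Open Scope ring_scope.
Implicit Types (U c : G -> R) (t u v : {ffun G -> nat}) (x y z : {ffun G -> R}).

Definition cost U t : R := \sum_(g : G | g != 0) U g * (t g)%:R.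

Lemma cost_add U1 U2 t : cost (fun g => U1 g + U2 g) t = cost U1 t + cost U2 t.
Proof. by rewrite /cost -big_split; apply: eq_bigr => g _; rewrite mulrDl. Qed.

Lemma cost_count (a : G) t : a != 0 -> cost (fun g => (g == a)%:R) t = (t a)%:R.
Proof.
move=> Ha; rewrite /cost (bigD1 a) //= eqxx mul1r big1 ?addr0 //.
by move=> g /andP [_ /negbTE ->]; rewrite mul0r.
Qed.

Lemma dotp_embed c t : dotp c (embed R t) = cost c t.
Proof. by apply: eq_bigr => g _; rewrite ffunE. Qed.

Lemma dotp_opp c x : dotp (fun g => - c g) x = - dotp c x.
Proof. by rewrite /dotp -sumrN; apply: eq_bigr => g _; rewrite mulNr. Qed.

Lemma embed_inj : injective (@embed G R).
Proof.
move=> t u /ffunP E; apply/ffunP => g.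
by have /eqP := E g; rewrite !ffunE eqr_nat => /eqP.
Qed.

Lemma inP_embed t : inT g0 t -> inP g0 (embed R t).
Proof.
move=> Ht; exists 1%N, (fun _ => t), (fun _ => 1); do 2!split=> //.
by split=> [|g]; rewrite big_ord1 // mul1r ffunE.
Qed.

Lemma dotp_conv n (ts : 'I_n -> {ffun G -> nat}) (lam : 'I_n -> R) c x :
  (forall g, x g = \sum_(i < n) lam i * (ts i g)%:R) ->
  dotp c x = \sum_(i < n) lam i * cost c (ts i).
Proof.
move=> Hx; rewrite /dotp.
under eq_bigr => g _ do rewrite Hx mulr_sumr.
rewrite exchange_big /=; apply: eq_bigr => i _.
by rewrite /cost mulr_sumr; apply: eq_bigr => g _; ring.
Qed.

Lemma conv_cost_bound U D n (ts : 'I_n -> {ffun G -> nat}) (lam : 'I_n -> R) :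
  (forall t, inT g0 t -> D <= cost U t) ->
  (forall i, inT g0 (ts i)) -> (forall i, 0 <= lam i) -> \sum_(i < n) lam i = 1 ->
  D <= \sum_(i < n) lam i * cost U (ts i) /\
  (\sum_(i < n) lam i * cost U (ts i) = D ->
     forall i, lam i != 0 -> cost U (ts i) = D).
Proof.
move=> Hlb Hts Hlam Hsum.
have Egap : \sum_(i < n) lam i * cost U (ts i) - D =
            \sum_(i < n) lam i * (cost U (ts i) - D).
  rewrite -[X in _ - X]mul1r -Hsum mulr_suml -sumrB.
  by apply: eq_bigr => i _; ring.
have Hge i : true -> 0 <= lam i * (cost U (ts i) - D).
  by move=> _; rewrite mulr_ge0 // subr_ge0 Hlb.
split; first by rewrite -subr_ge0 Egap sumr_ge0.
move=> Heq i Hi; have := psumr_eq0P Hge; rewrite -Egap Heq subrr.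
move=> /(_ erefl i isT) /eqP; rewrite mulf_eq0 (negbTE Hi) subr_eq0.
by move/eqP.
Qed.

Definition exposed (Q : {ffun G -> R} -> Prop) : Prop :=
  exists (c : G -> R) (d : R),
    (forall x, inP g0 x -> dotp c x <= d) /\
    (forall x, inP g0 x -> (dotp c x = d <-> Q x)).

Definition conv_closed (Q : {ffun G -> R} -> Prop) : Prop :=
  forall n (xs : 'I_n -> {ffun G -> R}) (lam : 'I_n -> R),
    (forall i, 0 <= lam i) -> \sum_(i < n) lam i = 1 ->
    (forall i, lam i != 0 -> Q (xs i)) ->
    Q [ffun g => \sum_(i < n) lam i * xs i g].

Lemma exposed_of_min U D (Q : {ffun G -> R} -> Prop) :
  (forall t, inT g0 t -> D <= cost U t) ->
  (forall t, inT g0 t -> cost U t = D -> Q (embed R t)) ->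
  conv_closed Q -> (forall x, Q x -> dotp U x = D) ->
  exposed Q.
Proof.
move=> Hlb Hmin HQ HQD; exists (fun g => - U g), (- D); split.
  move=> x [n [ts [lam [Hts [Hlam [Hsum Hx]]]]]].
  rewrite dotp_opp (dotp_conv _ Hx) lerN2.
  exact: (conv_cost_bound Hlb Hts Hlam Hsum).1.
move=> x [n [ts [lam [Hts [Hlam [Hsum Hx]]]]]]; split; last first.
  by move=> /HQD HUx; rewrite dotp_opp HUx.
rewrite dotp_opp (dotp_conv _ Hx) => /oppr_inj Heq.
have Hface := (conv_cost_bound Hlb Hts Hlam Hsum).2 Heq.
have -> : x = [ffun g => \sum_(i < n) lam i * embed R (ts i) g].
  by apply/ffunP => g; rewrite ffunE Hx; apply: eq_bigr => i _; rewrite ffunE.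
by apply: HQ => // i Hi; apply: Hmin (Hts i) (Hface i Hi).
Qed.

Lemma conv_closed_point z : conv_closed (fun x => x = z).
Proof.
move=> n xs lam _ Hsum HQ; apply/ffunP => g.
rewrite ffunE -[z g]mul1r -Hsum mulr_suml; apply: eq_bigr => i _.
by case: (eqVneq (lam i) 0) => [->|/HQ ->]; rewrite ?mul0r.
Qed.

Definition segment x y (l : R) : {ffun G -> R} :=
  [ffun g => (1 - l) * x g + l * y g].

Definition on_segment x y z : Prop :=
  exists l : R, 0 <= l <= 1 /\ z = segment x y l.

Lemma dotp_segment c x y l :
  dotp c (segment x y l) = (1 - l) * dotp c x + l * dotp c y.
Proof.
rewrite /dotp !mulr_sumr -big_split /=; apply: eq_bigr => g _.
by rewrite ffunE; ring.
Qed.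

(* The parameter of a point of a segment, read off a coordinate where the
   endpoints differ; it makes the choice of parameters constructive. *)
Definition seg_coord x y z : R :=
  if [pick g | x g != y g] is Some g then (z g - x g) / (y g - x g) else 0.

Lemma seg_coordP x y z : on_segment x y z ->
  0 <= seg_coord x y z <= 1 /\ z = segment x y (seg_coord x y z).
Proof.
case=> l [Hl ->]; rewrite /seg_coord; case: pickP => [g Hg | Hxy].
  suff -> : (segment x y l g - x g) / (y g - x g) = l by [].
  have Hd : y g - x g != 0 by rewrite subr_eq0 eq_sym.
  by rewrite ffunE; field.
have Exy : x = y by apply/ffunP => g; have /negbFE/eqP := Hxy g.
split; first by rewrite lexx ler01.
by subst y; apply/ffunP => g; rewrite !ffunE; ring.
Qed.

Lemma conv_closed_segment x y : conv_closed (on_segment x y).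
Proof.
move=> n xs lam Hlam Hsum HQ; pose l i := seg_coord x y (xs i).
have Hl i : lam i != 0 -> 0 <= l i <= 1 /\ xs i = segment x y (l i).
  by move=> /HQ; apply: seg_coordP.
exists (\sum_(i < n) lam i * l i); split.
  apply/andP; split.
    apply: sumr_ge0 => i _; case: (eqVneq (lam i) 0) => [->|/Hl [/andP [] ]].
      by rewrite mul0r.
    by move=> *; apply: mulr_ge0.
  rewrite -Hsum; apply: ler_sum => i _.
  case: (eqVneq (lam i) 0) => [->|/Hl [/andP [_ H1] _]]; first by rewrite !mul0r.
  by rewrite ler_piMr.
apply/ffunP => g; rewrite !ffunE.
have Ei i : lam i * xs i g = lam i * ((1 - l i) * x g + l i * y g).
  case: (eqVneq (lam i) 0) => [->|/Hl [_ ->]]; first by rewrite !mul0r.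
  by rewrite ffunE.
under eq_bigr do rewrite Ei.
have -> : 1 - \sum_(i < n) lam i * l i = \sum_(i < n) lam i * (1 - l i).
  by rewrite -{1}Hsum -sumrB; apply: eq_bigr => i _; ring.
by rewrite !mulr_suml -big_split; apply: eq_bigr => i _ /=; ring.
Qed.

Record unique_min U v : Prop := UniqueMin {
  umin_inT : inT g0 v;
  umin_le : forall t, inT g0 t -> cost U v <= cost U t;
  umin_eq : forall t, inT g0 t -> cost U t = cost U v -> t = v }.

Lemma vertex_of_unique_min U v : unique_min U v -> is_vertex g0 (embed R v).
Proof.
case=> Hv Hlb Huniq; split; first exact: inP_embed.
apply: (@exposed_of_min U (cost U v)) => //.
- by move=> t Ht /(Huniq t Ht) ->.
- exact: conv_closed_point.
- by move=> x ->; rewrite dotp_embed.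
Qed.

Lemma unique_min_of_vertex v :
  inT g0 v -> is_vertex g0 (embed R v) -> exists U, unique_min U v.
Proof.
move=> Hv [_ [c [d [Hle Hiff]]]]; have Ev := (Hiff _ (inP_embed Hv)).2 erefl.
exists (fun g => - c g); split=> // t Ht; rewrite -!dotp_embed !dotp_opp Ev.
  by rewrite lerN2 Hle //; apply: inP_embed.
by move=> /oppr_inj /(Hiff _ (inP_embed Ht)).1 /embed_inj.
Qed.

Lemma adjacent_of_min U u v :
  is_vertex g0 (embed R u) -> is_vertex g0 (embed R v) ->
  embed R u <> embed R v ->
  (forall t, inT g0 t -> cost U u <= cost U t) -> cost U v = cost U u ->
  (forall t, inT g0 t -> cost U t = cost U u ->
     on_segment (embed R u) (embed R v) (embed R t)) ->
  adjacent g0 (embed R u) (embed R v).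
Proof.
move=> Hu Hv Huv Hlb Hvu Hseg; do 3!split=> //.
apply: (@exposed_of_min U (cost U u)) => //; first exact: conv_closed_segment.
by move=> x [l [_ ->]]; rewrite dotp_segment !dotp_embed Hvu; ring.
Qed.

End Polyhedron.

Section GroupSums.
Variable G : finZmodType.
Local Open Scope ring_scope.
Implicit Types (a b t : {ffun G -> nat}).

Definition gsum b : G := \sum_(g : G | g != 0) g *+ b g.

Definition single (a : G) (k : nat) : {ffun G -> nat} :=
  [ffun g => if g == a then k else 0%N].

Lemma gsumD a b : gsum [ffun g => (a g + b g)%N] = gsum a + gsum b.
Proof. by rewrite /gsum -big_split; apply: eq_bigr => g _; rewrite ffunE mulrnDr. Qed.

Lemma gsumB a b : (forall g, b g <= a g)%N ->
  gsum [ffun g => (a g - b g)%N] = gsum a - gsum b.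
Proof. by move=> H; rewrite /gsum -sumrB; apply: eq_bigr => g _; rewrite ffunE mulrnBr. Qed.

Lemma gsumM k b : gsum [ffun g => (k * b g)%N] = gsum b *+ k.
Proof. by rewrite /gsum -sumrMnl; apply: eq_bigr => g _; rewrite ffunE mulnC mulrnA. Qed.

Lemma gsum_single (a : G) k : a != 0 -> gsum (single a k) = a *+ k.
Proof.
move=> Ha; rewrite /gsum (bigD1 a) //= ffunE eqxx big1 ?addr0 //.
by move=> g /andP [_ Hg]; rewrite ffunE (negbTE Hg).
Qed.

Lemma gsum_inT (g0 : G) t : inT g0 t -> gsum t = g0.
Proof. by case=> _ []. Qed.

End GroupSums.

Section Exchange.
Variables (G : finZmodType) (R : realFieldType) (g0 : G).
Variables (w : G -> R) (t0 : {ffun G -> nat}).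
Hypothesis Hmin : unique_min g0 w t0.
Local Open Scope ring_scope.

Lemma cost_balance (c : G -> R) (a b e f : {ffun G -> nat}) :
  (forall g, a g + b g = e g + f g)%N ->
  cost c a + cost c b = cost c e + cost c f.
Proof.
move=> H; rewrite /cost -!big_split; apply: eq_bigr => g _.
by rewrite /= -!mulrDr -!natrD H.
Qed.

(* Exchange property of the unique minimizer t0: two nonzero sub-vectors of
   t0 representing the same group element coincide, for otherwise swapping
   one for the other in t0 produces two points of T whose costs average to
   the minimum, so one of them would be a second minimizer. *)
Lemma exchange (A B : {ffun G -> nat}) :
  (forall g, A g <= t0 g)%N -> (forall g, B g <= t0 g)%N ->
  A 0 = 0%N -> B 0 = 0%N -> gsum A = gsum B ->
  (exists g, 0 < A g)%N -> (exists g, 0 < B g)%N -> A = B.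
Proof.
case: Hmin => Ht0 Hlb Huniq HA HB A0 B0 HAB [ga Hga] [gb Hgb].
have T0 : t0 0 = 0%N by case: Ht0.
have swapT (X Y : {ffun G -> nat}) : (forall g, X g <= t0 g)%N ->
    X 0 = 0%N -> Y 0 = 0%N -> gsum X = gsum Y -> forall y, (0 < Y y)%N ->
    inT g0 [ffun g => ([ffun g => t0 g - X g] g + Y g)%N].
  move=> HX X0 Y0 HXY y Hy; split; first by rewrite !ffunE T0 X0 Y0.
  split; first by rewrite -/(gsum _) gsumD gsumB // HXY subrK (gsum_inT Ht0).
  move=> _; exists y; split; last by rewrite !ffunE; lia.
  by apply/eqP => Ey; move: Hy; rewrite Ey Y0.
have Hu := swapT A B HA A0 B0 HAB gb Hgb.
have Hv := swapT B A HB B0 A0 (esym HAB) ga Hga.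
have Esum : cost w [ffun g => ([ffun g => t0 g - A g] g + B g)%N] +
            cost w [ffun g => ([ffun g => t0 g - B g] g + A g)%N] =
            cost w t0 + cost w t0.
  by apply: cost_balance => g; rewrite !ffunE; have := HA g; have := HB g; lia.
have := Hlb _ Hu; have := Hlb _ Hv => Cv Cu.
have /ffunP Eu := Huniq _ Hu (ltac:(lra)).
apply/ffunP => g; have := Eu g; have := HA g; have := HB g; rewrite !ffunE.
by move: (A g) (B g) (t0 g) => a b x; lia.
Qed.

Lemma exchange_absent (A : {ffun G -> nat}) (s g : G) :
  (forall x, A x <= t0 x)%N -> A 0 = 0%N -> gsum A = s -> s != 0 ->
  (0 < A g)%N -> g != s \/ (1 < A g)%N -> t0 s = 0%N.
Proof.
move=> HA A0 HAs Hs Hg Hnot; apply/eqP; rewrite -leqn0 leqNgt; apply/negP => Hts.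
have E : A = single s 1.
  apply: exchange => //.
  - by move=> x; rewrite ffunE; case: eqP => [->|].
  - by rewrite ffunE eq_sym (negbTE Hs).
  - by rewrite gsum_single // mulr1n.
  - by exists g.
  - by exists s; rewrite ffunE eqxx.
by move: Hg Hnot; rewrite E ffunE; case: (eqVneq g s) => // _ _ [].
Qed.

End Exchange.

Section Expand.
Variables (G : finZmodType) (R : realFieldType).
Local Open Scope ring_scope.
Implicit Types (b t u : {ffun G -> nat}).

Definition expand (n : G) b t : {ffun G -> nat} :=
  [ffun g => ((if g == n then 0 else t g) + t n * b g)%N].

Lemma expand_spec (n : G) b t g :
  (t g + t n * b g = expand n b t g + (if g == n then t n else 0))%N.
Proof. by rewrite ffunE; case: eqP => [->|_]; rewrite ?addn0 ?add0n // addnC. Qed.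

Lemma expand_id (n : G) b t : t n = 0%N -> expand n b t = t.
Proof.
move=> Htn; apply/ffunP => g; rewrite ffunE Htn mul0n addn0.
by case: eqP => [->|].
Qed.

Lemma expand_inj (n : G) b t u :
  t n = u n -> expand n b t = expand n b u -> t = u.
Proof.
move=> Enu /ffunP E; apply/ffunP => g.
have := expand_spec n b t g; have := expand_spec n b u g; rewrite E Enu.
by move: (t g) (u g) (expand n b u g) => x y z; case: (_ == _); lia.
Qed.

Lemma expand_inT (g0 n : G) b t : n != 0 -> b 0 = 0%N -> gsum b = n ->
  (exists g, 0 < b g)%N -> inT g0 t -> inT g0 (expand n b t).
Proof.
move=> Hn b0 Hb [gb Hgb] [t0 [Ht Hne]].
have Hgb0 : gb != 0 by apply/eqP => E; move: Hgb; rewrite E b0.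
split; first by rewrite ffunE eq_sym (negbTE Hn) t0 b0 muln0.
split.
  have Ex : expand n b t = [ffun g => ([ffun g => if g == n then 0%N else t g] g
                                       + [ffun g => t n * b g] g)%N].
    by apply/ffunP => g; rewrite !ffunE.
  have Et : t = [ffun g => ([ffun g => if g == n then 0%N else t g] g
                            + single n (t n) g)%N].
    by apply/ffunP => g; rewrite !ffunE; case: eqP => [->|]; rewrite ?addn0.
  rewrite -/(gsum _) Ex gsumD gsumM Hb.
  by move: Ht; rewrite -/(gsum t) {1}Et gsumD gsum_single.
move=> /Hne [g [Hg0 Hg]].
case: (eqVneq g n) => [Egn|Hgn].
  exists gb; split=> //; rewrite ffunE; move: Hg; rewrite Egn.
  by case: (_ == _); rewrite /=; nia.
by exists g; split=> //; rewrite ffunE (negbTE Hgn); lia.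
Qed.

Definition subst_weight (w : G -> R) (n : G) b : G -> R :=
  fun g => if g == n then cost w b else w g.

Lemma cost_subst_weight (w : G -> R) (n : G) b t : n != 0 ->
  cost (subst_weight w n b) t = cost w (expand n b t).
Proof.
move=> Hn; have Ex : cost w (expand n b t) =
    \sum_(g | g != 0) w g * (if g == n then 0%N else t g)%:R + (t n)%:R * cost w b.
  rewrite /cost mulr_sumr -big_split /=; apply: eq_bigr => g _.
  by rewrite ffunE natrD natrM; ring.
rewrite Ex /cost (bigD1 n) // (bigD1 n (P := fun g => g != 0)) //= /subst_weight.
rewrite !eqxx mulr0 add0r addrC mulrC; congr (_ + _).
by apply: eq_bigr => g /andP [_ /negbTE ->].
Qed.

Lemma expand_fiber_segment (n : G) b t s t0 (k : nat) :
  expand n b t = t0 -> expand n b s = t0 -> s n = k -> (0 < k)%N ->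
  (t n <= k)%N -> on_segment (embed R t0) (embed R s) (embed R t).
Proof.
move=> Et Es Hsn Hk Htn; have kR : (k%:R : R) != 0 by rewrite pnatr_eq0 -lt0n.
exists ((t n)%:R / k%:R); split.
  by rewrite divr_ge0 ?ler0n //= ler_pdivrMr ?mul1r ?ler_nat ?ltr0n.
apply/ffunP => g; rewrite !ffunE.
have /(congr1 (fun x => x%:R : R)) := expand_spec n b t g.
have /(congr1 (fun x => x%:R : R)) := expand_spec n b s g.
rewrite Et Es Hsn !natrD !natrM.
move=> /(canRL (addrK _)) -> /(canRL (addrK _)) ->.
by case: eqP => _; field.
Qed.

End Expand.

Record mu_chain (G : finZmodType) (g0 : G) (m : nat)
    (ts : nat -> {ffun G -> nat}) (nu : nat -> mu_op G) : Prop := MuChain {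
  chain_step : forall i, (1 <= i <= m)%N ->
    applicable g0 (ts i.-1) (nu i) /\ ts i = mu_apply (nu i) (ts i.-1);
  chain_link : forall i, (1 <= i < m)%N ->
    leading (nu i.+1) = new_elem (nu i) (ts i.-1) }.

Lemma mu_chain_shift (G : finZmodType) (g0 : G) m ts nu i :
  mu_chain g0 m ts nu -> (i <= m)%N ->
  mu_chain g0 (m - i) (fun k => ts (i + k)%N) (fun k => nu (i + k)%N).
Proof.
move=> [Hstep Hlink] Him; split=> k Hk /=;
  have -> : (i + k.-1 = (i + k).-1)%N by lia.
  by apply: Hstep; lia.
by rewrite addnS; apply: Hlink; lia.
Qed.

Lemma applicable_leading (G : finZmodType) (g0 : G) t o :
  applicable g0 t o -> leading o != 0%R /\ (0 < t (leading o))%N.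
Proof.
case: o => [h f|h] [_ H] /=; first by case/and5P: H.
by case/and3P: H => -> /ltnW.
Qed.

Section Chain.
Variables (G : finZmodType) (R : realFieldType) (g0 : G) (w : G -> R).
Variables (m : nat) (ts : nat -> {ffun G -> nat}) (nu : nat -> mu_op G).
Hypothesis Hchain : mu_chain g0 m ts nu.
Hypothesis Hm : (0 < m)%N.
Hypothesis Hmin : unique_min g0 w (ts 0%N).
Local Open Scope ring_scope.

Let h1 := leading (nu 1%N).

Lemma h1_spec : h1 != 0 /\ (0 < ts 0%N h1)%N.
Proof. by have [/applicable_leading] := chain_step Hchain (i := 1%N) Hm. Qed.

(* Invariant of the chain at step j with current element n: t_j is obtained
   from t_0 by replacing k disjoint copies of a block b, which represents n
   and absorbs every copy of h1, by k copies of n. *)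
Record chain_inv (j : nat) (n : G) (k : nat) (b : {ffun G -> nat}) : Prop :=
  ChainInv {
  inv_balance : forall g, (ts j g + k * b g = ts 0%N g + (if g == n then k else 0))%N;
  inv_count : ts j n = k;
  inv_k_gt0 : (0 < k)%N;
  inv_n_nz : n != 0;
  inv_b0 : b 0 = 0%N;
  inv_bsum : gsum b = n;
  inv_bh1 : (k * b h1 = ts 0%N h1)%N;
  inv_bn : (0 < j)%N -> b n = 0%N }.

Section InvFacts.
Variables (j : nat) (n : G) (k : nat) (b : {ffun G -> nat}).
Hypothesis I : chain_inv j n k b.

Lemma inv_le g : (k * b g <= ts 0%N g)%N.
Proof.
have := inv_balance I g; have := inv_balance I n; rewrite eqxx (inv_count I).
by case: eqP => [->|_]; lia.
Qed.

Lemma inv_bh1_gt0 : (0 < b h1)%N.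
Proof. by have := inv_bh1 I; have [_] := h1_spec; lia. Qed.

Lemma inv_expand : expand n b (ts j) = ts 0%N.
Proof.
apply/ffunP => g; have := expand_spec n b (ts j) g; have := inv_balance I g.
rewrite (inv_count I); move: (expand _ _ _ g) (ts 0%N g) => x y.
by case: (_ == _); lia.
Qed.

Lemma inv_h1_absent : h1 != n -> ts j h1 = 0%N.
Proof. by move=> H; have := inv_balance I h1; rewrite (negbTE H) (inv_bh1 I); lia. Qed.

Lemma inv_inT : inT g0 (ts j).
Proof.
have [T0 _] := umin_inT Hmin.
split.
  by have := inv_balance I 0; rewrite eq_sym (negbTE (inv_n_nz I)) (inv_b0 I); lia.
split.
  have E : [ffun g => (ts j g + [ffun g => k * b g] g)%N] =
           [ffun g => (ts 0%N g + single n k g)%N].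
    by apply/ffunP => g; rewrite !ffunE (inv_balance I).
  have := congr1 (@gsum G) E.
  rewrite !gsumD gsumM gsum_single ?(inv_n_nz I) // (inv_bsum I).
  by rewrite (gsum_inT (umin_inT Hmin)) => /addIr.
by move=> _; exists n; rewrite (inv_count I) (inv_n_nz I) (inv_k_gt0 I).
Qed.

End InvFacts.

Lemma inv_start : chain_inv 0 h1 (ts 0%N h1) (single h1 1).
Proof.
have [Hh1 Hpos] := h1_spec; split=> //.
- by move=> g; rewrite ffunE; case: eqP => [->|_]; lia.
- by rewrite ffunE eq_sym (negbTE Hh1).
- by rewrite gsum_single.
- by rewrite ffunE eqxx muln1.
Qed.

Lemma inv_pair j n k b f : chain_inv j n k b ->
  applicable g0 (ts j) (MuPair n f) -> ts j.+1 = mu_apply (MuPair n f) (ts j) ->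
  chain_inv j.+1 (n + f) k [ffun g => (b g + single f 1 g)%N].
Proof.
move=> I [_ /and5P [_ Hf0 _ Hf /and3P [Hnf Hle Hs0]]] Hnext.
set b' := [ffun g => _]; have K := inv_k_gt0 I; have Hn := inv_count I.
rewrite Hn in Hle; have Hfn : f != n by rewrite eq_sym.
have Hsn : n + f != n by rewrite -subr_eq0 addrC addKr.
have Hsf : n + f != f by rewrite -subr_eq0 addrK (inv_n_nz I).
have Hb'le g : (b' g <= ts 0%N g)%N.
  rewrite !ffunE; case: (eqVneq g f) => [->|_]; last by have := inv_le I g; nia.
  have := inv_balance I f; rewrite (negbTE Hfn).
  by move: (b f) (ts j f) (ts 0%N f) Hle => x y z; nia.
have Hb'0 : b' 0 = 0%N by rewrite !ffunE (inv_b0 I) eq_sym (negbTE Hf0).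
have Hb'sum : gsum b' = n + f by rewrite gsumD gsum_single // (inv_bsum I).
have Ht0s : ts 0%N (n + f) = 0%N.
  apply: (exchange_absent Hmin Hb'le Hb'0 Hb'sum Hs0 (g := f)).
    by rewrite !ffunE eqxx addn1.
  by left; rewrite eq_sym.
have Hjs : ts j (n + f) = 0%N /\ b (n + f) = 0%N.
  by have := inv_balance I (n + f); rewrite (negbTE Hsn) Ht0s; lia.
have Hh1f : h1 != f.
  case: (eqVneq h1 n) => [->|Hh1n] //.
  by apply/eqP => E; have := inv_h1_absent I Hh1n; rewrite E; lia.
split=> //.
- move=> g; rewrite Hnext !ffunE.
  case: (eqVneq g n) => [->|Hgn].
    rewrite (negbTE Hnf) eq_sym (negbTE Hsn).
    by have := inv_balance I n; rewrite eqxx Hn; lia.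
  case: (eqVneq g f) => [->|Hgf].
    rewrite eq_sym (negbTE Hsf) Hn; have := inv_balance I f; rewrite (negbTE Hfn).
    by move: (b f) (ts j f) (ts 0%N f) Hle => x y z; nia.
  case: (eqVneq g (n + f)) => [->|Hgs]; first by rewrite Hjs.1 Hjs.2 Ht0s Hn; lia.
  by have := inv_balance I g; rewrite (negbTE Hgn); lia.
- by rewrite Hnext ffunE (negbTE Hsn) (negbTE Hsf) eqxx Hjs.1 Hn.
- by rewrite !ffunE (negbTE Hh1f) addn0 (inv_bh1 I).
- by rewrite !ffunE (negbTE Hsf) addn0 Hjs.2.
Qed.

Lemma inv_single j n k b : chain_inv j n k b ->
  applicable g0 (ts j) (MuSingle n) -> ts j.+1 = mu_apply (MuSingle n) (ts j) ->
  chain_inv j.+1 (n *+ k) 1 [ffun g => (k * b g)%N].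
Proof.
move=> I [_ /and3P [_ Hk Hs0]] Hnext; have Hn := inv_count I.
rewrite Hn in Hk Hs0; set b' := [ffun g => _].
have Hb'le g : (b' g <= ts 0%N g)%N by rewrite ffunE; apply: inv_le I g.
have Hb'0 : b' 0 = 0%N by rewrite ffunE (inv_b0 I) muln0.
have Hb'sum : gsum b' = n *+ k by rewrite gsumM (inv_bsum I).
have Hbh1 := inv_bh1_gt0 I.
have Ht0s : ts 0%N (n *+ k) = 0%N.
  apply: (exchange_absent Hmin Hb'le Hb'0 Hb'sum Hs0 (g := h1)); rewrite ffunE.
    by rewrite muln_gt0 Hbh1 (inv_k_gt0 I).
  by right; move: (b h1) Hbh1 => x; nia.
have Hbs : b (n *+ k) = 0%N.
  by have := inv_le I (n *+ k); rewrite Ht0s; have := inv_k_gt0 I; nia.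
split=> //.
- move=> g; rewrite Hnext !ffunE mul1n Hn.
  case: (eqVneq g n) => [->|Hgn].
    have := inv_balance I n; rewrite eqxx Hn.
    by case: (_ == _); lia.
  have := inv_balance I g; rewrite (negbTE Hgn).
  by case: (_ == _); lia.
- rewrite Hnext !ffunE Hn eqxx; case: (eqVneq (n *+ k) n) => [_|Hsn] //.
  by have := inv_balance I (n *+ k); rewrite (negbTE Hsn) Ht0s; lia.
- by rewrite ffunE mul1n (inv_bh1 I).
- by rewrite ffunE Hbs muln0.
Qed.

Lemma chain_invariant j : (j <= m)%N -> exists n k b,
  chain_inv j n k b /\ ((j < m)%N -> leading (nu j.+1) = n).
Proof.
elim: j => [_|j IH Hj].
  by exists h1, (ts 0%N h1), (single h1 1); split=> //; exact: inv_start.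
have [n [k [b [I /(_ Hj) Hlead]]]] := IH (ltnW Hj).
have [Happ Hnext] := chain_step Hchain (i := j.+1) Hj.
have Hlink : (j.+1 < m)%N -> leading (nu j.+2) = new_elem (nu j.+1) (ts j).
  by move=> Hj1; apply: (chain_link Hchain (i := j.+1)); rewrite Hj1.
move: Happ Hnext Hlink Hlead; case: (nu j.+1) => [h f|h] /= Happ Hnext Hlink Hh.
  subst h; exists (n + f), k, [ffun g => (b g + single f 1 g)%N].
  by split; [apply: inv_pair | apply: Hlink].
subst h; exists (n *+ k), 1%N, [ffun g => (k * b g)%N].
by split; [apply: inv_single | rewrite -(inv_count I); apply: Hlink].
Qed.

(* Every t_j (j > 0) is a vertex: it uniquely minimizes the weight of t_0
   with n re-priced as its block, plus a unit penalty on h1. *)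
Lemma chain_vertex j : (0 < j <= m)%N -> is_vertex g0 (embed R (ts j)).
Proof.
move=> /andP [Hj0 Hj]; have [n [k [b [I _]]]] := chain_invariant Hj.
have [Hh1 _] := h1_spec; have Hn := inv_n_nz I; have Hbh1 := inv_bh1_gt0 I.
have Hh1n : h1 != n by apply: contraTneq Hbh1 => ->; rewrite (inv_bn I).
have Hblock : exists g, (0 < b g)%N by exists h1.
have HexpT t : inT g0 t -> inT g0 (expand n b t).
  exact: expand_inT Hn (inv_b0 I) (inv_bsum I) Hblock.
pose U g := subst_weight w n b g + (g == h1)%:R.
have HU t : cost U t = cost w (expand n b t) + (t h1)%:R.
  by rewrite cost_add cost_subst_weight // cost_count.
apply: (@vertex_of_unique_min _ _ _ U); split; first exact: inv_inT I.
  move=> t Ht; rewrite !HU (inv_expand I) (inv_h1_absent I Hh1n) addr0.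
  by rewrite ler_wpDr ?ler0n // (umin_le Hmin) //; apply: HexpT.
move=> t Ht; rewrite !HU (inv_expand I) (inv_h1_absent I Hh1n) addr0 => Hcost.
have Hexp := HexpT t Ht.
have Hge := umin_le Hmin Hexp; have Hpen : 0 <= (t h1)%:R :> R by [].
have Eexp : expand n b t = ts 0%N by apply: (umin_eq Hmin Hexp); lra.
have Eh1 : t h1 = 0%N by apply/eqP; rewrite -(eqr_nat R); apply/eqP; lra.
apply: (expand_inj (n := n) (b := b)); last by rewrite Eexp (inv_expand I).
have := expand_spec n b t h1; rewrite Eexp (negbTE Hh1n) Eh1 -(inv_bh1 I) (inv_count I).
by move: (b h1) (t n) Hbh1 => x y; nia.
Qed.

(* t_0 and t_j (j > 0) are adjacent: the minimizers of the re-priced weight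
   are exactly the points of T expanding to t_0, and these lie on the
   segment from t_0 to t_j. *)
Lemma chain_adjacent j : (0 < j <= m)%N ->
  adjacent g0 (embed R (ts 0%N)) (embed R (ts j)).
Proof.
move=> /andP [Hj0 Hj]; have [n [k [b [I _]]]] := chain_invariant Hj.
have Hn := inv_n_nz I; have Hbh1 := inv_bh1_gt0 I.
have Hblock : exists g, (0 < b g)%N by exists h1.
have HexpT t : inT g0 t -> inT g0 (expand n b t).
  exact: expand_inT Hn (inv_b0 I) (inv_bsum I) Hblock.
have Ht0n : ts 0%N n = 0%N.
  by have := inv_balance I n; rewrite eqxx (inv_count I) (inv_bn I Hj0); lia.
have Hh1n : h1 != n by apply: contraTneq Hbh1 => ->; rewrite (inv_bn I).
have HU t : cost (subst_weight w n b) t = cost w (expand n b t).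
  exact: cost_subst_weight.
have Hvert0 := vertex_of_unique_min Hmin.
apply: (@adjacent_of_min _ _ _ (subst_weight w n b)) => //.
- by apply: chain_vertex; rewrite Hj0 Hj.
- move=> /embed_inj /ffunP /(_ n); rewrite Ht0n (inv_count I).
  by have := inv_k_gt0 I; lia.
- move=> t Ht; rewrite !HU (expand_id _ Ht0n).
  by rewrite (umin_le Hmin) //; apply: HexpT.
- by rewrite !HU (inv_expand I) (expand_id _ Ht0n).
move=> t Ht; rewrite !HU (expand_id _ Ht0n) => Hcost.
have Eexp : expand n b t = ts 0%N.
  by apply: (umin_eq Hmin) => //; apply: HexpT.
apply: (expand_fiber_segment R Eexp (inv_expand I) (inv_count I) (inv_k_gt0 I)).
have := expand_spec n b t h1; rewrite Eexp (negbTE Hh1n) -(inv_bh1 I).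
by move: (b h1) (t n) (t h1) Hbh1 => x y z; nia.
Qed.

End Chain.

Lemma chain_from_vertex (G : finZmodType) (g0 : G) (R : realFieldType) m ts nu :
  mu_chain g0 m ts nu -> (0 < m)%N -> is_vertex g0 (embed R (ts 0%N)) ->
  forall j, (0 < j <= m)%N -> adjacent g0 (embed R (ts 0%N)) (embed R (ts j)).
Proof.
move=> Hc Hm Hv j Hj; have [[Ht0 _] _] := chain_step Hc (i := 1%N) Hm.
have [w Hw] := unique_min_of_vertex Ht0 Hv.
exact: (chain_adjacent Hc Hm Hw Hj).
Qed.

Theorem theorem6 (G : finZmodType) (g0 : G) (R : realFieldType) (m : nat)
  (ts : nat -> {ffun G -> nat}) (nu : nat -> mu_op G) :
  (1 <= m)%N ->
  is_vertex g0 (embed R (ts 0%N)) ->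
  (forall i, (1 <= i <= m)%N ->
     applicable g0 (ts i.-1) (nu i) /\ ts i = mu_apply (nu i) (ts i.-1)) ->
  (forall i, (1 <= i < m)%N ->
     leading (nu i.+1) = new_elem (nu i) (ts i.-1)) ->
  (forall i j, (i <= m)%N -> (j <= m)%N -> i <> j -> ts i <> ts j) /\
  (forall i, (i <= m)%N -> is_vertex g0 (embed R (ts i))) /\
  (forall i j, (i < j <= m)%N ->
     adjacent g0 (embed R (ts i)) (embed R (ts j))).
Proof.
move=> Hm Hv Hstep Hlink; have Hc : mu_chain g0 m ts nu by split.
have Hvert i : (i <= m)%N -> is_vertex g0 (embed R (ts i)).
  by case: i => [//|i Hi]; have [_ []] := chain_from_vertex Hc Hm Hv (j := i.+1) Hi.
have Hadj i j : (i < j <= m)%N -> adjacent g0 (embed R (ts i)) (embed R (ts j)).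
  move=> /andP [Hij Hjm]; have Him : (i <= m)%N by lia.
  have /= := @chain_from_vertex _ g0 R _ _ _ (mu_chain_shift Hc Him) _ _ (j - i).
  rewrite /= addn0 subnKC ?(ltnW Hij) //; apply; [lia | exact: Hvert | lia].
split; last by split.
move=> i j Hi Hj /eqP; rewrite neq_ltn => /orP [] Hij Eij.
  by have [_ [_ [Hne _]]] := Hadj i j (ltac:(lia)); apply: Hne; rewrite Eij.
by have [_ [_ [Hne _]]] := Hadj j i (ltac:(lia)); apply: Hne; rewrite Eij.
Qed.
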